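(* Let $X$ be an $X$-set parameter and let $G$ be a graph with no isolated vertices. If there exists an automorphism $\varphi$ of $\mathscr{X}^{\rm TAR}(G)$ with $\varphi(V(G))\neq V(G)$, then $\mathscr{X}^{\rm TAR}(G)$ has a perfect matching.
   Context: All graphs are simple, finite, with nonempty vertex set. An $X$-set parameter is a graph parameter $X(G)$ defined as the minimum cardinality of an $X$-set of $G$, where the $X$-sets of each graph are subsets of its vertex set determined by some property satisfying: (1) supersets (within $V(G)$) of $X$-sets are $X$-sets; (2) the empty set is never an $X$-set; (3) an $X$-set of a disconnected graph is the union of an $X$-set of each component; (4) if $G$ has no isolated vertices, every set of $|V(G)|-1$ vertices is an $X$-set. The $X$-TAR graph $\mathscr{X}^{\rm TAR}(G)$ has as vertices all $X$-sets of $G$ (so $V(G)$ itself is a vertex), with $S_1,S_2$ adjacent iff $|S_1\ominus S_2|=1$ (symmetric difference). *)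

From mathcomp Require Import all_boot.
From mathcomp Require Import fingroup perm.
Set Implicit Arguments. Unset Strict Implicit. Unset Printing Implicit Defensive.

Definition simple_graph (T : finType) (e : rel T) : Prop :=
  [/\ symmetric e, irreflexive e & 0 < #|T|].

Definition no_isolated (T : finType) (e : rel T) : Prop :=
  forall x : T, exists y : T, e x y.

Definition disconnected (T : finType) (e : rel T) : Prop :=
  exists x y : T, ~~ connect e x y.

Definition gcomp (T : finType) (e : rel T) (x : T) : {set T} :=
  [set y | connect e x y].

Definition subV (T : finType) (A : {set T}) : finType := {y : T | y \in A}.

Definition induced (T : finType) (e : rel T) (A : {set T}) : rel (subV A) :=
  fun u v => e (val u) (val v).
Arguments induced [T] e A.

Definition restr (T : finType) (A S : {set T}) : {set subV A} :=
  [set u : subV A | val u \in S].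
Arguments restr [T] A S.

(* A family of "X-sets": for every graph (T, e), a predicate on subsets. *)
Definition Xfamily := forall T : finType, rel T -> {set T} -> bool.

Definition Xset_parameter (X : Xfamily) : Prop :=
  [/\
      (forall (T : finType) (e : rel T), simple_graph e ->
         forall S S' : {set T}, S \subset S' -> X T e S -> X T e S'),
      (forall (T : finType) (e : rel T), simple_graph e -> ~~ X T e set0),
      (* (3) X-sets of a disconnected graph are exactly unions of X-sets
             of each component *)
      (forall (T : finType) (e : rel T), simple_graph e -> disconnected e ->
         forall S : {set T},
           X T e S = [forall x : T,
                        X (subV (gcomp e x)) (induced e (gcomp e x))
                          (restr (gcomp e x) S)])
    &
      (forall (T : finType) (e : rel T), simple_graph e -> no_isolated e ->
         forall S : {set T}, #|S| = #|T| - 1 -> X T e S)].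

Definition TARV (X : Xfamily) (T : finType) (e : rel T) : finType :=
  {S : {set T} | X T e S}.

Definition symdiff (T : finType) (A B : {set T}) : {set T} :=
  (A :\: B) :|: (B :\: A).

Definition TARadj (X : Xfamily) (T : finType) (e : rel T) : rel (TARV X e) :=
  fun S1 S2 => #|symdiff (val S1) (val S2)| == 1.
Arguments TARadj X [T] e.

Definition graph_automorphism (V : finType) (adj : rel V) (phi : {perm V}) :=
  forall u v : V, adj (phi u) (phi v) = adj u v.

Definition perfect_matching (V : finType) (adj : rel V) (M : {set {set V}}) :=
  (forall m, m \in M -> exists u v : V, [/\ u != v, adj u v & m = [set u; v]])
  /\ (forall x : V, #|[set m in M | x \in m]| = 1).

Definition has_perfect_matching (V : finType) (adj : rel V) : Prop :=
  exists M : {set {set V}}, perfect_matching adj M.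

From mathcomp Require Import all_boot.
From mathcomp Require Import fingroup perm.
From mathcomp Require Import zify.
Set Implicit Arguments. Unset Strict Implicit. Unset Printing Implicit Defensive.

(* In the TAR graph the distance from an X-set A to S is at least |A Δ S|,
   and, X-sets being closed under supersets, the distance from V(G) to A is at
   most |V(G) \ A|.  An automorphism sending V(G) to S <> V(G) preserves total
   distances, so Σ_A |A Δ S| <= Σ_A |V(G) \ A|.  Counted element by element,
   each x in S contributes equally to both sides, while for x outside S adding
   x injects the X-sets avoiding x into those containing x.  The inequality
   forces this injection to be onto for every x outside S: then
   deleting x also preserves X-sets, and toggling x is a fixed-point-free
   involution along TAR edges whose orbits form a perfect matching. *)

Lemma sum_ord_ltn K m : \sum_(k < K) (k < m : nat) = minn m K.
Proof.
elim: K => [|K IHK]; first by rewrite big_ord0 minn0.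
by rewrite big_ord_recr /= IHK; case: (ltnP K m) => K_m; lia.
Qed.

Lemma geq_of_sum_geq (I : finType) (E1 E2 : I -> nat) :
  (forall i, E1 i <= E2 i) -> \sum_i E2 i <= \sum_i E1 i ->
  forall i, E2 i <= E1 i.
Proof.
move=> le12 sum_ge i.
have [_] := leqif_sum (fun i (_ : true) => leqif_geq (le12 i)).
by rewrite eqn_leq sum_ge leq_sum // => /esym/forall_inP; apply.
Qed.

Section FiniteGraph.

Variables (V : finType) (adj : rel V).

Definition ball (u : V) (k : nat) : {set V} :=
  iter k (fun R => R :|: [set y | [exists x in R, adj x y]]) [set u].

Lemma ball0 u : ball u 0 = [set u].
Proof. by []. Qed.

Lemma ballS u k :
  ball u k.+1 = ball u k :|: [set y | [exists x in ball u k, adj x y]].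
Proof. by []. Qed.

Lemma mem_ball_autom (phi : {perm V}) u k y :
  graph_automorphism adj phi -> (phi y \in ball (phi u) k) = (y \in ball u k).
Proof.
move=> phi_aut; elim: k y => [|k IHk] y.
  by rewrite !ball0 !in_set1 (inj_eq perm_inj).
rewrite !ballS !in_setU IHk !inE; congr (_ || _).
apply/existsP/existsP => -[x /andP[x_in adj_xy]].
- by exists (phi^-1 x)%g; rewrite -IHk permKV x_in -phi_aut permKV.
- by exists (phi x); rewrite IHk x_in phi_aut.
Qed.

Lemma ball_lipschitz (f : V -> nat) u k y :
  f u = 0 -> (forall x z, adj x z -> f z <= (f x).+1) ->
  y \in ball u k -> f y <= k.
Proof.
move=> fu0 f_lip; elim: k y => [|k IHk] y.
  by rewrite ball0 in_set1 => /eqP ->; rewrite fu0.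
rewrite ballS in_setU inE => /orP[/IHk/leqW // | /existsP[x /andP[x_in adj_xy]]].
by apply: leq_trans (f_lip _ _ adj_xy) _; rewrite ltnS IHk.
Qed.

Lemma ball_descent (f : V -> nat) u k y :
  (forall z, f z = 0 -> z = u) ->
  (forall z, 0 < f z -> exists2 x, adj x z & f x < f z) ->
  f y <= k -> y \in ball u k.
Proof.
move=> f0 f_desc; elim: k y => [|k IHk] y.
  by rewrite leqn0 ball0 in_set1 => /eqP/f0 ->.
rewrite ballS in_setU; case: (leqP (f y) k) => [/IHk -> // | fy_gt fy_le].
have [x adj_xy fx_lt] := f_desc y (leq_ltn_trans (leq0n k) fy_gt).
apply/orP; right; rewrite inE; apply/existsP; exists x.
by rewrite adj_xy IHk // -ltnS (leq_trans fx_lt fy_le).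
Qed.

(* [tdist u K y] is the distance from [u] to [y], truncated at [K]. *)
Definition tdist (u : V) (K : nat) (y : V) : nat :=
  \sum_(k < K) (y \notin ball u k).

Lemma sum_tdist_autom (phi : {perm V}) u K :
  graph_automorphism adj phi ->
  \sum_y tdist (phi u) K y = \sum_y tdist u K y.
Proof.
move=> phi_aut; rewrite (reindex_inj (@perm_inj _ phi)) /=.
by apply: eq_bigr => y _; apply: eq_bigr => k _; rewrite mem_ball_autom.
Qed.

Lemma tdist_ge (f : V -> nat) u K y :
  f u = 0 -> (forall x z, adj x z -> f z <= (f x).+1) ->
  minn (f y) K <= tdist u K y.
Proof.
move=> fu0 f_lip; rewrite -sum_ord_ltn; apply: leq_sum => k _.
case: ltnP => //= k_lt; rewrite lt0b; apply: contraL k_lt => y_in.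
by rewrite -leqNgt (ball_lipschitz fu0 f_lip y_in).
Qed.

Lemma tdist_le (f : V -> nat) u K y :
  (forall z, f z = 0 -> z = u) ->
  (forall z, 0 < f z -> exists2 x, adj x z & f x < f z) ->
  tdist u K y <= f y.
Proof.
move=> f0 f_desc; apply: leq_trans (geq_minl (f y) K).
rewrite -sum_ord_ltn; apply: leq_sum => k _.
case: ltnP => [_ | fy_le]; first exact: leq_b1.
by rewrite (ball_descent f0 f_desc fy_le).
Qed.

Lemma perfect_matching_of_involution (f : V -> V) :
  irreflexive adj -> involutive f -> (forall v, adj v (f v)) ->
  has_perfect_matching adj.
Proof.
move=> adj_irr fK adj_f.
exists [set [set v; f v] | v : V]; split.
  move=> _ /imsetP[v _ ->]; exists v, (f v); split => //.
  by apply: contraTneq (adj_f v) => <-; rewrite adj_irr.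
move=> x; apply/eqP/cards1P; exists [set x; f x]; apply/setP => m; rewrite !inE.
apply/andP/eqP => [[/imsetP[v _ ->]] | ->]; last first.
  by split; [apply/imsetP; exists x | rewrite set21].
by rewrite !inE => /orP[] /eqP ->; rewrite // fK setUC.
Qed.

End FiniteGraph.

Section Symdiff.

Variable T : finType.
Implicit Types A B C : {set T}.

Lemma symdiffC A B : symdiff A B = symdiff B A.
Proof. by rewrite /symdiff setUC. Qed.

Lemma symdiffss A : symdiff A A = set0.
Proof. by rewrite /symdiff setDv setU0. Qed.

Lemma card_symdiff_triangle A B C :
  #|symdiff A C| <= #|symdiff A B| + #|symdiff B C|.
Proof.
apply: leq_trans (leq_card_setU _ _); apply: subset_leq_card.
apply/subsetP => z; rewrite !inE.
by case: (z \in A); case: (z \in B); case: (z \in C).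
Qed.

Lemma mem_symdiff x A B : (x \in symdiff A B) = ((x \in A) != (x \in B)).
Proof. by rewrite !inE; case: (x \in A); case: (x \in B). Qed.

Definition toggle (x : T) A : {set T} := if x \in A then A :\ x else x |: A.

Lemma toggleK x : involutive (toggle x).
Proof.
move=> A; rewrite /toggle; have [xA | xNA] := boolP (x \in A).
  by rewrite setD11 setD1K.
by rewrite setU11 setU1K.
Qed.

Lemma symdiff_toggle x A : symdiff A (toggle x A) = [set x].
Proof.
apply/setP => y; rewrite mem_symdiff /toggle in_set1.
case: (eqVneq y x) => [-> | y_x]; case: ifP => xA; rewrite !inE ?eqxx ?xA //;
  by rewrite (negbTE y_x) /=; case: (y \in A).
Qed.

Lemma sum_card_exchange (I : finType) (P : pred I) (F : I -> {set T}) :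
  \sum_(i | P i) #|F i| = \sum_x #|[set i | P i & x \in F i]|.
Proof.
under eq_bigr do rewrite -sum1_card.
rewrite (exchange_big_dep xpredT) //=; apply: eq_bigr => x _.
by rewrite -sum1_card; apply: eq_bigl => i; rewrite inE.
Qed.

End Symdiff.

Section UpClosedFamily.

Variables (T : finType) (P : pred {set T}).
Hypothesis P_up : forall A B : {set T}, A \subset B -> P A -> P B.

Let notin_sets x := [set A | P A & x \notin A].
Let in_sets x := [set A | P A & x \in A].

Lemma card_add_notin_sets x : #|[set x |: A | A in notin_sets x]| = #|notin_sets x|.
Proof.
apply: card_in_imset => A B; rewrite !inE => /andP[_ xA] /andP[_ xB] eqAB.
by rewrite -(setU1K xA) -(setU1K xB) eqAB.
Qed.

Lemma add_notin_sets_sub x : [set x |: A | A in notin_sets x] \subset in_sets x.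
Proof.
apply/subsetP => _ /imsetP[A /[!inE] /andP[PA _] ->].
by rewrite setU11 (P_up (subsetUr _ _) PA).
Qed.

Lemma card_notin_le_in x : #|notin_sets x| <= #|in_sets x|.
Proof. by rewrite -card_add_notin_sets subset_leq_card ?add_notin_sets_sub. Qed.

Lemma delete_closed_of_card x :
  #|in_sets x| <= #|notin_sets x| -> forall A, P A -> P (A :\ x).
Proof.
move=> card_le A PA; case: (boolP (x \in A)) => [xA | xNA]; last first.
  have /setDidPl -> // : [disjoint A & [set x]].
  by rewrite disjoint_sym disjoints1.
have : A \in [set x |: B | B in notin_sets x].
  suff -> : [set x |: B | B in notin_sets x] = in_sets x by rewrite inE PA.
  by apply/eqP; rewrite eqEcard add_notin_sets_sub card_add_notin_sets.
by case/imsetP => B /[!inE] /andP[PB xB] ->; rewrite setU1K.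
Qed.

Lemma delete_closed_of_sum_le S :
  \sum_(A | P A) #|symdiff A S| <= \sum_(A | P A) #|~: A| ->
  forall x, x \notin S -> forall A, P A -> P (A :\ x).
Proof.
rewrite (sum_card_exchange P (fun A => symdiff A S)).
rewrite (sum_card_exchange P (@setC T)).
move=> sum_le x xNS; apply: delete_closed_of_card.
have compl_sets y : #|[set A | P A & y \in ~: A]| = #|notin_sets y|.
  by apply: eq_card => A; rewrite !inE.
have symdiff_sets_notin y : y \notin S ->
    #|[set A | P A & y \in symdiff A S]| = #|in_sets y|.
  by move=> yNS; apply: eq_card => A; rewrite !inE (negbTE yNS) andbF orbF.
have pointwise y :
    #|[set A | P A & y \in ~: A]| <= #|[set A | P A & y \in symdiff A S]|.
  rewrite compl_sets; case: (boolP (y \in S)) => [yS | /symdiff_sets_notin ->].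
    by apply: eq_leq; apply: eq_card => A; rewrite !inE yS /= andbT.
  exact: card_notin_le_in.
by have := geq_of_sum_geq pointwise sum_le x; rewrite compl_sets symdiff_sets_notin.
Qed.

End UpClosedFamily.

Section TARgraph.

Variables (X : Xfamily) (T : finType) (e : rel T).
Arguments X : clear implicits.

Lemma TARadj_irrefl : irreflexive (TARadj X e).
Proof. by move=> A; rewrite /TARadj symdiffss cards0. Qed.

Lemma TAR_perfect_matching_of_toggle x :
  (forall A, X T e A -> X T e (toggle x A)) -> has_perfect_matching (TARadj X e).
Proof.
move=> X_toggle.
pose tog (A : TARV X e) : TARV X e := exist _ (toggle x (val A)) (X_toggle _ (valP A)).
apply: (perfect_matching_of_involution TARadj_irrefl (f := tog)).
  by move=> A; apply: val_inj; rewrite /= toggleK.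
by move=> A; rewrite /TARadj /= symdiff_toggle cards1.
Qed.

Hypothesis X_up : forall S S' : {set T}, S \subset S' -> X T e S -> X T e S'.

Lemma TARadj_compl_descent (A : TARV X e) :
  0 < #|~: val A| -> exists2 B, TARadj X e B A & #|~: val B| < #|~: val A|.
Proof.
case/card_gt0P => z zNA; rewrite inE in zNA.
have add_z : toggle z (val A) = z |: val A by rewrite /toggle (negbTE zNA).
exists (exist _ (z |: val A) (X_up (subsetUr _ _) (valP A))).
  by rewrite /TARadj /= -add_z symdiffC symdiff_toggle cards1.
by rewrite /= [X in _ < X](cardsD1 z) inE zNA setCU setIC -setDE.
Qed.

Lemma sum_symdiff_le_sum_compl (phi : {perm TARV X e}) (u : TARV X e) :
  graph_automorphism (TARadj X e) phi -> val u = [set: T] ->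
  \sum_(A | X T e A) #|symdiff A (val (phi u))| <= \sum_(A | X T e A) #|~: A|.
Proof.
move=> phi_aut u_top; set S := val (phi u).
have sum_TARV F : \sum_(A | X T e A) F A = \sum_(A : TARV X e) F (val A).
  exact: big_sub.
rewrite !sum_TARV.
apply: (@leq_trans (\sum_A tdist (TARadj X e) (phi u) #|T| A)).
  apply: leq_sum => A _; rewrite -(minn_idPl (max_card (symdiff (val A) S))).
  apply: (tdist_ge (f := fun B => #|symdiff (val B) S|)) => [|B C adj_BC]; first by rewrite symdiffss cards0.
  apply: leq_trans (card_symdiff_triangle _ (val B) _) _.
  by move: adj_BC; rewrite /TARadj symdiffC => /eqP ->.
rewrite sum_tdist_autom //; apply: leq_sum => A _.
apply: (tdist_le (f := fun B => #|~: val B|)) => [B | B]; last exact: TARadj_compl_descent.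
move/eqP; rewrite cards_eq0 => /eqP compl0; apply: val_inj.
by rewrite u_top -[val B]setCK compl0 setC0.
Qed.

End TARgraph.

Theorem proposition2p17 (X : Xfamily) (T : finType) (e : rel T) :
  Xset_parameter X -> simple_graph e -> no_isolated e ->
  (exists phi : {perm TARV X e},
     graph_automorphism (TARadj X e) phi /\
     exists u : TARV X e, val u = [set: T] /\ val (phi u) != [set: T]) ->
  has_perfect_matching (TARadj X e).
Proof.
move=> [X_up _ _ _] e_simple _ [phi [phi_aut [u [u_top phi_u_ntop]]]].
have {}X_up := X_up T e e_simple.
have /subsetPn[x _ xN] : ~~ ([set: T] \subset val (phi u)) by rewrite subTset.
apply: (TAR_perfect_matching_of_toggle (x := x)) => A XA; rewrite /toggle.
case: ifP => _; last exact: X_up (subsetUr _ _) XA.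
exact: (delete_closed_of_sum_le (P := X T e) X_up
          (sum_symdiff_le_sum_compl X_up phi_aut u_top) xN XA).
Qed.
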